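(* Let $\mathrm b_1,\mathrm b_2$ be two profiles, and let $L^{\mathrm b_1},L^{\mathrm b_2}$ be constructed from the same environment $\omega$. Let $k\le l$ be integers and $n\ge 1$. If $Z^{\mathrm b_1}[l]_n\le Z^{\mathrm b_2}[k]_n$, then $$L^{\mathrm b_1}[l]_n-L^{\mathrm b_1}[k]_n\le L^{\mathrm b_2}[l]_n-L^{\mathrm b_2}[k]_n .$$
   Context: Let $\omega=\{\omega_{i,j}:(i,j)\in\mathbb Z^2,\ i+j>0\}$ be i.i.d. exponential random variables with parameter $1$. Write $(i,j)\le(k,l)$ if $i\le k$ and $j\le l$. An up-right path from $\mathbf x$ to $\mathbf y$ is a sequence $\mathbf x=\mathbf x_0,\dots,\mathbf x_m=\mathbf y$ with increments in $\{(1,0),(0,1)\}$; its passage time is $\sum_{i=1}^m\omega_{\mathbf x_i}$ (starting point excluded). For $\mathbf x=(i,j)\le\mathbf y$ with $i+j\ge0$, $L(\mathbf x,\mathbf y)$ is the maximal passage time over up-right paths from $\mathbf x$ to $\mathbf y$. Set $L_k(\mathbf x)=L((k,-k),\mathbf x)$, $C^{\mathbf x}=\{k\in\mathbb Z:(k,-k)\le\mathbf x\}$ and $[k]_n:=(n+k,n-k)$. A profile is a function $\mathrm b:\mathbb Z\to\mathbb R\cup\{-\infty\}$ with $\mathrm b(0)=0$. Define $L^{\mathrm b}(\mathbf x):=\max_{k\in C^{\mathbf x}}\{\mathrm b(k)+L_k(\mathbf x)\}$ and the exit point $Z^{\mathrm b}(\mathbf x)$ as the largest $k\in C^{\mathbf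 x}$ attaining this maximum. *)

From HB Require Import structures.
From mathcomp Require Import all_boot all_order all_algebra.
From mathcomp Require Export constructive_ereal.
Set Implicit Arguments. Unset Strict Implicit. Unset Printing Implicit Defensive.
Import Order.TTheory GRing.Theory Num.Theory.
Local Open Scope ring_scope.

Section LPP.
Variable R : realDomainType.
(* environment: omega i j = weight at site (i,j) (only sites with i+j>0 are used) *)
Variable omega : int -> int -> R.

Definition step (p : int * int) (e : bool) : int * int :=
  if e then (p.1 + 1, p.2)%R else (p.1, p.2 + 1)%R.

(* passage time of the path from x with step sequence s, starting point excluded *)
Definition passage (x : int * int) (s : seq bool) : R :=
  (\sum_(p <- scanl step x s) omega p.1 p.2)%R.

(* last-passage time L(x,y): maximum over all up-right paths from x to y
   (paths = step sequences of length |y1-x1|+|y2-x2| with |y1-x1| east steps);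
   -oo if x is not <= y *)
Definition plen (x y : int * int) : nat :=
  (absz (y.1 - x.1)%R + absz (y.2 - x.2)%R)%N.

Definition Lpp (x y : int * int) : \bar R :=
  if ((x.1 <= y.1) && (x.2 <= y.2))%R then
    \big[Order.max/-oo%E]_(s : (plen x y).-tuple bool
                          | (count id s == absz (y.1 - x.1)%R)%N)
      (passage x s)%:E
  else -oo%E.

Definition Lk (k : int) (x : int * int) : \bar R := Lpp (k, (- k)%R) x.

(* C^x = { k : (k,-k) <= x } = [-x2, x1], listed in increasing order *)
Definition Cx (x : int * int) : seq int :=
  if (0 <= x.1 + x.2)%R then
    [seq (- x.2 + m%:Z)%R | m <- iota 0 (absz (x.1 + x.2)).+1]
  else [::].

Definition Lb (b : int -> \bar R) (x : int * int) : \bar R :=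
  \big[Order.max/-oo%E]_(k <- Cx x) (b k + Lk k x)%E.

(* Z^b(x) = largest k in C^x attaining the maximum *)
Definition Zb (b : int -> \bar R) (x : int * int) : int :=
  last 0%R [seq k <- Cx x | (b k + Lk k x)%E == Lb b x].

End LPP.

Definition is_profile (R : realDomainType) (b : int -> \bar R) : Prop :=
  b 0 = 0%E /\ forall k, b k != +oo%E.

Definition pt (n k : int) : int * int := (n + k, n - k)%R.

From HB Require Import structures.
From mathcomp Require Import all_boot all_order all_algebra.
From mathcomp Require Import constructive_ereal.
From mathcomp Require Import zify lra.
Set Implicit Arguments. Unset Strict Implicit. Unset Printing Implicit Defensive.
Import Order.TTheory GRing.Theory Num.Theory.
Local Open Scope ring_scope.

(* Let z1 := Z^b1[l]_n and z2 := Z^b2[k]_n, so that L^b1[l]_n = b1(z1) + L_z1[l]_n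
   and L^b2[k]_n = b2(z2) + L_z2[k]_n.  Since z1 <= z2 and [k]_n lies weakly to the
   left of [l]_n, a geodesic from (z1,-z1) to [l]_n and one from (z2,-z2) to [k]_n
   must meet; exchanging their tails gives the crossing inequality
     L_z1[l]_n + L_z2[k]_n <= L_z1[k]_n + L_z2[l]_n,
   and bounding b1(z1) + L_z1[k]_n by L^b1[k]_n and b2(z2) + L_z2[l]_n by L^b2[l]_n
   yields L^b1[l]_n + L^b2[k]_n <= L^b1[k]_n + L^b2[l]_n. *)

Definition path_end (x : int * int) (s : seq bool) : int * int := foldl step x s.

Lemma path_endE x s :
  path_end x s = (x.1 + (count id s)%:Z, x.2 + (size s - count id s)%:Z).
Proof.
elim: s x => [|e s IHs] [a c] /=; first by rewrite !addr0.
rewrite /path_end /= -/(path_end _ _) IHs /step; have := count_size id s.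
by case: e => /= ?; congr pair; lia.
Qed.

Lemma path_end_cat x s1 s2 : path_end x (s1 ++ s2) = path_end (path_end x s1) s2.
Proof. exact: foldl_cat. Qed.

Lemma passage_cat (R : realDomainType) (omega : int -> int -> R) x s1 s2 :
  passage omega x (s1 ++ s2) = passage omega x s1 + passage omega (path_end x s1) s2.
Proof. by rewrite /passage scanl_cat big_cat. Qed.

Lemma count_take_step (s : seq bool) t :
  (count id (take t s) <= count id (take t.+1 s) <= count id (take t s) + 1)%N.
Proof.
by rewrite -addn1 takeD count_cat; case: (drop t s) => [|[] ?] /=; rewrite ?take0 /=; lia.
Qed.

Lemma discrete_ivt (f : nat -> int) N :
  f 0%N <= 0 -> 0 <= f N -> (forall t, f t.+1 <= f t + 1) ->
  exists2 t, (t <= N)%N & f t = 0.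
Proof.
move=> f0 fN fS; elim: N fN => [|N IHN] fN; first by exists 0%N => //; lia.
have [/IHN[t tN ft]|fN_lt0] := leP 0 (f N); first by exists t => //; lia.
by exists N.+1 => //; have := fS N; lia.
Qed.

(* Two up-right paths of equal length starting on a common antidiagonal, the first
   starting to the left of the second and ending to its right, meet after the same
   number of steps: their horizontal gap moves by at most one per step. *)
Lemma paths_meet (x1 x2 : int * int) (s1 s2 : seq bool) :
  size s1 = size s2 -> x1.1 + x1.2 = x2.1 + x2.2 -> x1.1 <= x2.1 ->
  (path_end x2 s2).1 <= (path_end x1 s1).1 ->
  exists t, path_end x1 (take t s1) = path_end x2 (take t s2).
Proof.
move=> size12 level12 start12; rewrite !path_endE /= => end12.
pose gap t : int := x1.1 + (count id (take t s1))%:Z - (x2.1 + (count id (take t s2))%:Z).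
have [t tN gap_t] : exists2 t, (t <= size s1)%N & gap t = 0.
  apply: discrete_ivt => [||t]; rewrite /gap.
  - by rewrite !take0 /=; lia.
  - by rewrite take_size take_oversize ?size12 //; lia.
  - by have := count_take_step s1 t; have := count_take_step s2 t; lia.
exists t; have := count_size id (take t s1); have := count_size id (take t s2).
by move: gap_t; rewrite /gap !path_endE !size_takel -?size12 // => *; congr pair; lia.
Qed.

Lemma mem_Cx (x : int * int) (k : int) : k <= x.1 -> - k <= x.2 -> k \in Cx x.
Proof.
move=> le1 le2; rewrite /Cx ifT; last by lia.
apply/mapP; exists (absz (k + x.2)); last by lia.
by rewrite mem_iota; apply/andP; split=> //; lia.
Qed.

Lemma bigmax_seq_attained d (T : orderType d) (I : eqType) (r : seq I)
    (P : pred I) (F : I -> T) (x0 : T) :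
  \big[Order.max/x0]_(i <- r | P i) F i != x0 ->
  exists2 i, (i \in r) && P i & \big[Order.max/x0]_(i <- r | P i) F i = F i.
Proof.
rewrite big_seq_cond.
apply: (big_ind (fun v => v != x0 -> exists2 i, (i \in r) && P i & v = F i)).
- by move/eqP.
- by move=> a b IHa IHb; rewrite maxEle; case: ifP => _; [exact: IHb | exact: IHa].
- by move=> i ri _; exists i.
Qed.

Section LastPassage.
Variables (R : realDomainType) (omega : int -> int -> R).
Local Open Scope ereal_scope.

Lemma Lpp_ge_passage x s y :
  path_end x s = y -> (passage omega x s)%:E <= Lpp omega x y.
Proof.
move=> <- {y}; have := count_size id s; have := path_endE x s.
set y := path_end x s => Ey count_s; rewrite /Lpp ifT; last first.
  by rewrite Ey /=; apply/andP; split; lia.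
have size_s : size s == plen x y by rewrite Ey /plen /=; apply/eqP; lia.
apply: (@le_bigmax_seq _ _ _ _ _ (Tuple size_s)); first exact: mem_index_enum.
by rewrite /= Ey /=; apply/eqP; lia.
Qed.

Lemma Lpp_attained x y : Lpp omega x y != -oo ->
  exists2 s, path_end x s = y & Lpp omega x y = (passage omega x s)%:E.
Proof.
rewrite /Lpp; case: ifP => [/andP[le1 le2]|_]; last by rewrite eqxx.
move=> /bigmax_seq_attained[s /andP[_ /eqP count_s] ->]; exists (tval s) => //.
by rewrite path_endE count_s size_tuple /plen [RHS]surjective_pairing; congr pair; lia.
Qed.

(* Exchange the tails of two geodesics at their meeting point. *)
Lemma Lpp_cross (x1 x2 y1 y2 : int * int) :
  (x1.1 + x1.2 = x2.1 + x2.2)%R -> (y1.1 + y1.2 = y2.1 + y2.2)%R ->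
  (x1.1 <= x2.1)%R -> (y2.1 <= y1.1)%R ->
  Lpp omega x1 y1 + Lpp omega x2 y2 <= Lpp omega x1 y2 + Lpp omega x2 y1.
Proof.
move=> level_x level_y start12 end21.
have [->|/Lpp_attained[s1 E1 ->]] := eqVneq (Lpp omega x1 y1) -oo.
  by rewrite addNye leNye.
have [->|/Lpp_attained[s2 E2 ->]] := eqVneq (Lpp omega x2 y2) -oo.
  by rewrite addeNy leNye.
have size12 : size s1 = size s2.
  have := count_size id s1; have := count_size id s2.
  by move: level_y; rewrite -E1 -E2 !path_endE /=; lia.
have [|t meet] := paths_meet size12 level_x start12; first by rewrite E1 E2.
have E12 : path_end x1 (take t s1 ++ drop t s2) = y2.
  by rewrite path_end_cat meet -path_end_cat cat_take_drop.
have E21 : path_end x2 (take t s2 ++ drop t s1) = y1.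
  by rewrite path_end_cat -meet -path_end_cat cat_take_drop.
apply: le_trans (leeD (Lpp_ge_passage E12) (Lpp_ge_passage E21)).
rewrite -!EFinD lee_fin -{1}(cat_take_drop t s1) -{1}(cat_take_drop t s2).
by rewrite !passage_cat meet; lra.
Qed.

Lemma Lk_notin_Cx k x : k \notin Cx x -> Lk omega k x = -oo.
Proof.
by rewrite /Lk /Lpp /=; case: ifP => // /andP[le1 le2]; rewrite mem_Cx.
Qed.

Lemma Lb_ge b x k : b k + Lk omega k x <= Lb omega b x.
Proof.
have [kx|/Lk_notin_Cx->] := boolP (k \in Cx x); last by rewrite addeNy leNye.
exact: (le_bigmax_seq _ _ _ _ kx).
Qed.

Lemma Zb_attains b x : Lb omega b x != -oo ->
  b (Zb omega b x) + Lk omega (Zb omega b x) x = Lb omega b x.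
Proof.
move=> /bigmax_seq_attained[j /andP[jx _] Lb_j].
rewrite /Zb; set p := fun k => b k + Lk omega k x == Lb omega b x.
have pj : j \in filter p (Cx x) by rewrite mem_filter jx andbT /p /Lb Lb_j eqxx.
have filter_p i : i \in filter p (Cx x) -> p i by rewrite mem_filter => /andP[].
case: (filter p (Cx x)) filter_p pj => [//|a s] filter_p _.
by apply/eqP/filter_p; rewrite /= mem_last.
Qed.

End LastPassage.

Theorem lemma1 (R : realDomainType) (omega : int -> int -> R)
    (b1 b2 : int -> \bar R) (k l n : int) :
  is_profile b1 -> is_profile b2 ->
  (k <= l)%R -> (1 <= n)%R ->
  Lb omega b1 (pt n l) \is a fin_num -> Lb omega b1 (pt n k) \is a fin_num ->
  Lb omega b2 (pt n l) \is a fin_num -> Lb omega b2 (pt n k) \is a fin_num ->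
  (Zb omega b1 (pt n l) <= Zb omega b2 (pt n k))%R ->
  (Lb omega b1 (pt n l) - Lb omega b1 (pt n k)
     <= Lb omega b2 (pt n l) - Lb omega b2 (pt n k))%E.
Proof.
move=> _ _ kl _ f1l f1k f2l f2k.
set z1 := Zb omega b1 (pt n l); set z2 := Zb omega b2 (pt n k) => z12.
have cross : (Lk omega z1 (pt n l) + Lk omega z2 (pt n k)
              <= Lk omega z1 (pt n k) + Lk omega z2 (pt n l))%E.
  by apply: Lpp_cross => /=; lia.
have sum_le : (Lb omega b1 (pt n l) + Lb omega b2 (pt n k)
               <= Lb omega b1 (pt n k) + Lb omega b2 (pt n l))%E.
  have [[f1l_Ny _] [f2k_Ny _]] := (fin_numP _ f1l, fin_numP _ f2k).
  rewrite -(Zb_attains f1l_Ny) -(Zb_attains f2k_Ny) -/z1 -/z2 addeACA.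
  apply: le_trans (leeD (lexx _) cross) _.
  by rewrite addeACA; apply: leeD; apply: Lb_ge.
rewrite leeBrDr // addeAC lee_subel_addr // [X in (_ <= X)%E]addeC.
exact: sum_le.
Qed.
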